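(* Let $\Lambda=KQ/\langle I\rangle$ be a gentle algebra over an algebraically closed field $K$, let $\Gamma=KQ^{Aus}/\langle I^{Aus}\rangle$ be its Cohen–Macaulay Auslander algebra, and let $\Phi:\mathrm{mod}\,\Lambda\to\mathrm{mod}\,\Gamma$ be the functor described in the context. Then for every projective $\Lambda$-module $P$ the $\Gamma$-module $\Phi(P)$ is projective, and for every injective $\Lambda$-module $J$ the $\Gamma$-module $\Phi(J)$ is injective.
   Context: Conventions: arrows $\alpha:s(\alpha)\to t(\alpha)$; paths composed right to left ($\beta\alpha$ means $\alpha$ then $\beta$). A gentle algebra is a finite dimensional $\Lambda=KQ/\langle I\rangle$ where $I$ is a set of length-$2$ paths such that: each vertex is the start of at most two and the end of at most two arrows; for each arrow $\alpha$ there is at most one arrow $\beta$ with $t(\beta)=s(\alpha)$, $\alpha\beta\notin I$, at most one $\gamma$ with $s(\gamma)=t(\alpha)$, $\gamma\alpha\notin I$, at most one $\beta$ with $t(\beta)=s(\alpha)$, $\alpha\beta\in I$, and at most one $\gamma$ with $s(\gamma)=t(\alpha)$, $\gamma\alpha\in I$. Modules are finite dimensional left modules, i.e. representations of $(Q,I)$. $\mathcal{C}(\Lambda)$ is the set of repetition-free cyclic paths $\alpha_1\cdots\alpha_n$ (up to cyclic permutation) with $\alpha_i\alpha_{i+1}\in I$ for all $i$ (indices mod $n$); $Q_1^{cyc}$ is the set of arrows lying on such a cycle, $Q_1^{ncyc}=Q_1\setminus Q_1^{cyc}$. $Q^{Aus}$ has vertices $Q_0\sqcup Q_1^{cyc}$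 and arrows $Q_1^{ncyc}\sqcup\{\alpha^+:s(\alpha)\to\alpha\}_{\alpha\in Q_1^{cyc}}\sqcup\{\alpha^-:\alpha\to t(\alpha)\}_{\alpha\in Q_1^{cyc}}$; $I^{Aus}=\{\beta^+\alpha^-\mid\beta\alpha\in I,\ \alpha,\beta\in Q_1^{cyc}\}\cup\{\beta\alpha\mid\beta\alpha\in I,\ \alpha,\beta\in Q_1^{ncyc}\}$; $\Gamma=KQ^{Aus}/\langle I^{Aus}\rangle$ is (isomorphic to) the Cohen–Macaulay Auslander algebra of $\Lambda$. $\Phi(M)=\widehat{M}$ has $\widehat{M}_i=M_i$ ($i\in Q_0$), $\widehat{M}_\alpha=\mathrm{Im}\,M_\alpha$ ($\alpha\in Q_1^{cyc}$), $\widehat{M}_\beta=M_\beta$ ($\beta\in Q_1^{ncyc}$), and $\widehat{M}_{\alpha^+}$, $\widehat{M}_{\alpha^-}$ the surjection $M_{s(\alpha)}\to\mathrm{Im}\,M_\alpha$ and inclusion $\mathrm{Im}\,M_\alpha\to M_{t(\alpha)}$ factoring $M_\alpha$; morphisms go to induced morphisms. *)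

(* Representations of bound quivers over a field K,
   written with ROW-vector conventions: the linear map of an arrow
   a : i -> j is v |-> v *m M_a with M_a : 'M_(dim i, dim j). *)
From HB Require Import structures.
From mathcomp Require Import all_boot all_algebra.
Import GRing.Theory.
Local Open Scope ring_scope.

Record quiver := Quiver { qvert : Type; qarr : Type;
  qsrc : qarr -> qvert; qtgt : qarr -> qvert }.

(* A quiver with a set of length-2 relations: brel b a means "b a ∈ I"
   (paths composed right to left: first a, then b). *)
Record bquiver := BQuiver { bq :> quiver;
  brel : qarr bq -> qarr bq -> Prop;
  brel_comp : forall b a, brel b a -> qtgt bq a = qsrc bq b }.

Set Implicit Arguments. Unset Strict Implicit. Unset Printing Implicit Defensive.

Section Reps.
Variable K : fieldType.

Record rep (Q : quiver) := Rep { rdim : qvert Q -> nat;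
  rmap : forall a : qarr Q, 'M[K]_(rdim (qsrc Q a), rdim (qtgt Q a)) }.

Variable Q : bquiver.

Definition rcomp (M : rep Q) (b a : qarr Q) (e : qtgt Q a = qsrc Q b)
  : 'M[K]_(rdim M (qsrc Q a), rdim M (qtgt Q b)) :=
  rmap M a *m castmx (congr1 (rdim M) (esym e), erefl) (rmap M b).

Definition satisfies (M : rep Q) : Prop :=
  forall b a (h : brel Q b a), rcomp M (@brel_comp Q b a h) = 0.

Definition is_hom (M N : rep Q) (f : forall i, 'M[K]_(rdim M i, rdim N i)) : Prop :=
  forall a : qarr Q, rmap M a *m f (qtgt Q a) = f (qsrc Q a) *m rmap N a.

Definition projective_rep (P : rep Q) : Prop :=
  satisfies P /\
  forall (M N : rep Q) (g : forall i, 'M[K]_(rdim M i, rdim N i))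
         (f : forall i, 'M[K]_(rdim P i, rdim N i)),
    satisfies M -> satisfies N -> is_hom g -> is_hom f ->
    (forall i, row_full (g i)) ->   (* g surjective *)
    exists h : forall i, 'M[K]_(rdim P i, rdim M i),
      is_hom h /\ forall i, h i *m g i = f i.

Definition injective_rep (J : rep Q) : Prop :=
  satisfies J /\
  forall (L M : rep Q) (g : forall i, 'M[K]_(rdim L i, rdim M i))
         (f : forall i, 'M[K]_(rdim L i, rdim J i)),
    satisfies L -> satisfies M -> is_hom g -> is_hom f ->
    (forall i, row_free (g i)) ->   (* g injective *)
    exists h : forall i, 'M[K]_(rdim M i, rdim J i),
      is_hom h /\ forall i, g i *m h i = f i.
End Reps.

Section Gentle.
Variables (Q0 Q1 : finType) (s t : Q1 -> Q0).
(* I b a  <->  the length-2 path  b a  (first a, then b) lies in I *)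
Variable I : rel Q1.

Definition lamQ : quiver := @Quiver Q0 Q1 s t.

Definition lamBQ (HI : forall b a, I b a -> t a = s b) : bquiver :=
  @BQuiver lamQ (fun b a => I b a) HI.

(* a path a_1 a_2 ... a_n traversed in this order (a_1 first) that is
   nonzero in KQ/<I> *)
Definition nonzero_path (p : seq Q1) : Prop :=
  forall (a b : Q1) (p1 p2 : seq Q1), p = p1 ++ a :: b :: p2 ->
    t a = s b /\ ~~ I b a.

(* KQ/<I> is finite dimensional: nonzero paths have bounded length *)
Definition fin_dim : Prop :=
  exists n : nat, forall p, nonzero_path p -> (size p < n)%N.

Definition gentle : Prop :=
  (forall i : Q0, #|[pred a | s a == i]| <= 2)%N /\
  (forall i : Q0, #|[pred a | t a == i]| <= 2)%N /\
  forall a : Q1,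
    [/\ (#|[pred b | (t b == s a) && ~~ I a b]| <= 1)%N,
        (#|[pred c | (s c == t a) && ~~ I c a]| <= 1)%N,
        (#|[pred b | (t b == s a) && I a b]| <= 1)%N &
        (#|[pred c | (s c == t a) && I c a]| <= 1)%N].

Definition is_cyc (a : Q1) : Prop :=
  exists p : seq Q1, [/\ uniq p, a \in p &
    forall i, (i < size p)%N -> I (nth a p i) (nth a p (i.+1 %% size p))].

Definition cycA := {a : Q1 | is_cyc a}.
Definition ncycA := {a : Q1 | ~ is_cyc a}.

Definition ausV := (Q0 + cycA)%type.
Inductive ausA :=
  | ANc of ncycA
  | APlus of cycA
  | AMinus of cycA.

Definition ausS (x : ausA) : ausV :=
  match x with
  | ANc a => inl (s (proj1_sig a))
  | APlus a => inl (s (proj1_sig a))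
  | AMinus a => inr a
  end.
Definition ausT (x : ausA) : ausV :=
  match x with
  | ANc a => inl (t (proj1_sig a))
  | APlus a => inr a
  | AMinus a => inl (t (proj1_sig a))
  end.

Definition ausQ : quiver := @Quiver ausV ausA ausS ausT.

(* I^Aus: ausRel y x means "y x ∈ I^Aus" (first x, then y) *)
Definition ausRel (y x : ausA) : Prop :=
  match x, y with
  | AMinus a, APlus b => I (proj1_sig b) (proj1_sig a)
  | ANc a, ANc b => I (proj1_sig b) (proj1_sig a)
  | _, _ => False
  end.

Hypothesis HI : forall b a, I b a -> t a = s b.

Lemma ausRel_comp y x : ausRel y x -> ausT x = ausS y.
Proof.
case: x => a; case: y => b //= h; rewrite (HI h) //.
Qed.

Definition ausBQ : bquiver := @BQuiver ausQ ausRel ausRel_comp.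

Section Phi.
Variable K : fieldType.
Variable M : rep K lamQ.

Definition phi_dim (v : ausV) : nat :=
  match v with
  | inl i => rdim M i
  | inr a => \rank (rmap M (proj1_sig a))
  end.

(* Im M_alpha is represented by the row space of M_alpha with basis
   row_base M_alpha; M_alpha = col_base M_alpha *m row_base M_alpha is
   the factorisation surjection (col_base) followed by inclusion (row_base). *)
Definition phi_map (x : ausA) : 'M[K]_(phi_dim (ausS x), phi_dim (ausT x)) :=
  match x as x0 return 'M[K]_(phi_dim (ausS x0), phi_dim (ausT x0)) with
  | ANc a => rmap M (proj1_sig a)
  | APlus a => col_base (rmap M (proj1_sig a))
  | AMinus a => row_base (rmap M (proj1_sig a))
  end.

Definition Phi : rep K ausQ := @Rep K ausQ phi_dim phi_map.
End Phi.
End Gentle.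

From mathcomp Require Import all_boot all_algebra.
From Stdlib Require Import ProofIrrelevance ClassicalEpsilon.
(* Let Res be restriction along the embedding of Lambda into Gamma sending a
   cyclic arrow alpha to the path alpha^- alpha^+; then Res (Phi M) = M.  A
   lifting problem for Phi P against an epimorphism of Gamma-modules thus
   restricts to one for P, solved by some h, and the only new datum is the
   value at a vertex alpha of Q_1^cyc: h(s alpha) M(alpha^+) must factor
   through P_alpha ->> Im P_alpha.  It does because it vanishes on
   Ker P_alpha, which is contained in Im P_beta for the arrow beta with
   alpha beta in I: this holds in the free module spanned by the nonzero paths
   (gentleness makes beta unique), hence in its direct summands, the
   projectives; and Im P_beta is killed since alpha^+ beta^- lies in I^Aus.
   Injectives are dual: the transpose of an injective Lambda-module is a
   projective module over the opposite algebra. *)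

Set Implicit Arguments. Unset Strict Implicit. Unset Printing Implicit Defensive.
Import GRing.Theory.
Local Open Scope ring_scope.

Section MatrixFacts.
Variable K : fieldType.

Lemma castmx_pid m m' p (e : m = m') (B : 'M[K]_(m, p)) :
  castmx (e, erefl) B = pid_mx m' *m B.
Proof. by case: m' / e; rewrite castmx_id pid_mx_1 mul1mx. Qed.

Lemma pid_mx_natural (V : Type) (d1 d2 : V -> nat)
    (G : forall v, 'M[K]_(d1 v, d2 v)) x y :
  x = y -> pid_mx (d1 x) *m G y = G x *m pid_mx (d2 x).
Proof. by case: y /; rewrite !pid_mx_1 mul1mx mulmx1. Qed.

Lemma tr_pid_mx_sq m n : (pid_mx m : 'M[K]_(m, n))^T = pid_mx n.
Proof. by rewrite tr_pid_mx -(@pid_mx_minv _ n m m) -(@pid_mx_minh _ n m n) minnC. Qed.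

Lemma mul_pid_mx_pad m D p : (m <= D)%N ->
  (pid_mx m : 'M[K]_(m, D)) *m (pid_mx D : 'M_(D, p)) = pid_mx m.
Proof. by move=> le_mD; rewrite mul_pid_mx (minn_idPl le_mD) (minn_idPr le_mD). Qed.

Lemma ker_sub_img_dual m1 n m2 p (A : 'M[K]_(m1, n)) (B : 'M[K]_(n, m2))
    (Y : 'M[K]_(p, n)) :
  (forall q (V : 'M[K]_(q, n)), V *m A^T = 0 -> (V <= B^T)%MS) ->
  Y *m B = 0 -> (Y <= A)%MS.
Proof.
move=> kerAT_sub YB0; rewrite submxE.
have /submxP[W defW] : ((cokermx A)^T <= B^T)%MS.
  by apply: kerAT_sub; rewrite -trmx_mul mulmx_coker trmx0.
by rewrite -[cokermx A]trmxK defW trmx_mul trmxK mulmxA YB0 mul0mx.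
Qed.

Lemma row_full_factor m r n p (C : 'M[K]_(m, r)) (R : 'M[K]_(r, n))
    (Y : 'M[K]_(m, p)) :
  row_full C -> (forall q (V : 'M[K]_(q, m)), V *m (C *m R) = 0 -> V *m Y = 0) ->
  C *m (pinvmx C *m Y) = Y.
Proof.
move=> /mulVpmx LC kerCR_sub.
have : (1%:M - C *m pinvmx C) *m (C *m R) = 0.
  by rewrite mulmxBl mul1mx -mulmxA (mulmxA _ C) LC mul1mx subrr.
by move/kerCR_sub/eqP; rewrite mulmxBl mul1mx subr_eq0 mulmxA => /eqP <-.
Qed.

Lemma col_base_factor m n p (A : 'M[K]_(m, n)) (Y : 'M[K]_(m, p)) :
  (forall q (V : 'M[K]_(q, m)), V *m A = 0 -> V *m Y = 0) ->
  col_base A *m (pinvmx (col_base A) *m Y) = Y.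
Proof. by rewrite -{1}(mulmx_base A); apply: row_full_factor; apply: col_base_full. Qed.

Lemma row_base_factor m n p (A : 'M[K]_(m, n)) (Y : 'M[K]_(p, n)) :
  (Y <= A)%MS -> Y *m pinvmx (row_base A) *m row_base A = Y.
Proof. by move=> YA; apply: mulmxKpV; rewrite eq_row_base. Qed.

Lemma base_mul_eq0 m n p q (A : 'M[K]_(m, n)) (X : 'M[K]_(n, p)) (B : 'M[K]_(p, q)) :
  A *m X *m B = 0 -> row_base A *m X *m col_base B = 0.
Proof.
rewrite -{1}(mulmx_base A) -{1}(mulmx_base B).
move: (col_base_full A) (row_base_free B) (col_base B).
move: (col_base A) (row_base A) (row_base B) => CA RA RB CA_full RB_free CB AXB0.
apply/eqP; rewrite -(mulmx_free_eq0 _ RB_free) -(inj_eq (row_full_inj CA_full)).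
by rewrite mulmx0 !(mulmxA CA) -(mulmxA _ CB) AXB0.
Qed.

Lemma satisfiesE (Q : bquiver) (M : rep K Q) :
  satisfies M <-> forall b a, brel Q b a ->
    rmap M a *m pid_mx (rdim M (qtgt Q a)) *m rmap M b = 0.
Proof. by split=> H b a h; move: (H b a h); rewrite /rcomp castmx_pid mulmxA. Qed.

End MatrixFacts.

Section SeqsBelow.
Variable T : finType.

Definition seqs_below k : seq (seq T) :=
  flatten [seq [seq val p | p : m.-tuple T] | m <- iota 0 k].

Lemma mem_seqs_below k p : (p \in seqs_below k) = (size p < k)%N.
Proof.
apply/flattenP/idP => [[_ /mapP [m] + -> /imageP [q _ ->]] | lt_pk].
  by rewrite mem_iota size_tuple.
exists [seq val q | q : (size p).-tuple T]; first by apply: map_f; rewrite mem_iota.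
by apply/imageP; exists (in_tuple p).
Qed.

End SeqsBelow.

Section PathModule.
Variables (K : fieldType) (Q0 Q1 : finType) (s t : Q1 -> Q0) (I : rel Q1).
Hypothesis HI : forall b a, I b a -> t a = s b.
Variable n : nat.
Hypothesis path_bound : forall p, nonzero_path s t I p -> (size p < n)%N.
Variable N : rep K (lamQ s t).
Hypothesis N_rel :
  forall b a, I b a -> rmap N a *m pid_mx (rdim N (t a)) *m rmap N b = 0.

Local Notation d := (rdim N).

Definition nzstep a b := (t a == s b) && ~~ I b a.

Lemma sorted_nonzero_path p : sorted nzstep p -> nonzero_path s t I p.
Proof.
move=> p_sorted a b p1 p2 defp; subst p.
suff /andP[/eqP -> ->] : nzstep a b by [].
case: p1 p_sorted => [/andP[] //|c p1].
by rewrite /= cat_path /= => /and3P[_ _ /andP[]].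
Qed.

Definition npath (x : Q0 * seq Q1) :=
  sorted nzstep x.2 && (if x.2 is a :: _ then s a == x.1 else true).

Definition npath_end (x : Q0 * seq Q1) := last x.1 [seq t a | a <- x.2].

Lemma npath_size x : npath x -> (size x.2 < n)%N.
Proof. by case/andP => /sorted_nonzero_path /path_bound. Qed.

Lemma npath_rcons2 i q b a :
  npath (i, rcons (rcons q b) a) = npath (i, rcons q b) && nzstep b a.
Proof.
case: q => [|c q]; rewrite /npath /=.
  by rewrite andbT; case: (nzstep b a); case: (s b == i).
rewrite rcons_path last_rcons.
by case: (path _ _ _); case: (nzstep b a); case: (s c == i).
Qed.

Lemma npath_end_rcons i q a : npath_end (i, rcons q a) = t a.
Proof. by rewrite /npath_end /= map_rcons last_rcons. Qed.

Lemma npath_rcons_prefix i q b :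
  npath (i, rcons q b) -> npath (i, q) && (npath_end (i, q) == s b).
Proof.
case/lastP: q => [|q c]; first by rewrite /npath /npath_end /= eq_sym.
by rewrite npath_rcons2 npath_end_rcons => /andP[-> /andP[]].
Qed.

(* The path module has a basis element ((i, p), k) for the k-th standard
   basis vector of N_i followed by the nonzero path p.  Path matrices are
   computed in a common dimension D >= d i, padding with pid_mx; D is chosen
   positive so that 'I_D has a default element for nth. *)
Definition D := (\max_i d i).+1.

Lemma leq_dim_D i : (d i <= D)%N.
Proof. by apply: leqW; apply: leq_bigmax. Qed.

Definition pelt := ((Q0 * seq Q1) * 'I_D)%type.

Definition pelts : seq pelt :=
  [seq (x, k) | x <- [seq (i, p) | i <- enum Q0, p <- seqs_below Q1 n],
                k <- enum 'I_D].

Definition pbasis j : seq pelt :=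
  undup [seq x : pelt <- pelts |
          [&& npath x.1, npath_end x.1 == j & (x.2 < d x.1.1)%N]].

Lemma mem_pbasis j x :
  (x \in pbasis j) = [&& npath x.1, npath_end x.1 == j & (x.2 < d x.1.1)%N].
Proof.
rewrite mem_undup mem_filter andb_idr // => /and3P[x_npath _ lt_k].
case: x x_npath lt_k => [[i p] k] /= x_npath lt_k.
apply/allpairsP; exists ((i, p), k); split => //.
  by apply/allpairsP; exists (i, p); rewrite mem_enum mem_seqs_below npath_size.
by rewrite mem_enum.
Qed.

Definition pb j (x : 'I_(size (pbasis j))) := nth ((j, [::]), ord0) (pbasis j) x.

Lemma pb_mem j x : @pb j x \in pbasis j.
Proof. exact: mem_nth. Qed.

Lemma pb_inj j : injective (@pb j).
Proof.
by move=> x y /eqP; rewrite nth_uniq ?undup_uniq // => /eqP; apply: val_inj.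
Qed.

Lemma pb_onto j e : e \in pbasis j -> exists x, @pb j x = e.
Proof.
by rewrite -index_mem => lt_e; exists (Ordinal lt_e); rewrite /pb nth_index -?index_mem.
Qed.

Definition selmx m j (e : 'I_m -> pelt) : 'M[K]_(m, size (pbasis j)) :=
  \matrix_(x, y) (e x == pb y)%:R.

Lemma row_selmx m j (e : 'I_m -> pelt) p (G : 'M[K]_(size (pbasis j), p)) x :
  row x (selmx j e *m G) = \sum_(y | e x == pb y) row y G.
Proof.
rewrite row_mul mulmx_sum_row (bigID (fun y => e x == pb y)) /= addrC big1 ?add0r.
  by apply: eq_bigr => y exy; rewrite !mxE exy scale1r.
by move=> y /negbTE nexy; rewrite !mxE nexy scale0r.
Qed.

Lemma sum_pb_eq1 j e x (V : zmodType) (F : 'I_(size (pbasis j)) -> V) :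
  pb x = e -> \sum_(y | e == pb y) F y = F x.
Proof. by move=> <-; apply: big_pred1 => y; rewrite eq_sym (inj_eq (@pb_inj j)). Qed.

Lemma sum_pb_eq0 j e (V : zmodType) (F : 'I_(size (pbasis j)) -> V) :
  e \notin pbasis j -> \sum_(y | e == pb y) F y = 0.
Proof.
move=> e_notin; rewrite big_pred0 // => y.
by apply: contraNF e_notin => /eqP ->; apply: pb_mem.
Qed.

Definition padmx a : 'M[K]_D := pid_mx D *m rmap N a *m pid_mx (d (t a)).

Fixpoint pathmx (p : seq Q1) : 'M[K]_D :=
  if p is a :: q then padmx a *m pathmx q else 1%:M.

Lemma pathmx_rcons p a : pathmx (rcons p a) = pathmx p *m padmx a.
Proof. by elim: p => [|b p IHp] /=; rewrite ?mul1mx ?mulmx1 // IHp mulmxA. Qed.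

Definition extend a (x : pelt) : pelt := ((x.1.1, rcons x.1.2 a), x.2).

Definition PathRep : rep K (lamQ s t) :=
  @Rep K (lamQ s t) (fun j => size (pbasis j))
    (fun a => selmx (t a) (fun x => extend a (@pb (s a) x))).

Definition cover j : 'M[K]_(size (pbasis j), d j) :=
  \matrix_(x < size (pbasis j)) row (pb x).2 (pathmx (pb x).1.2 *m pid_mx D).

Lemma extend_notin_pbasis i p a (k : 'I_D) :
  npath (i, p) -> npath_end (i, p) = s a -> (k < d i)%N ->
  ((i, rcons p a), k) \notin pbasis (t a) -> exists p' b, p = rcons p' b /\ I a b.
Proof.
move=> ip_npath ip_end lt_k; rewrite mem_pbasis /= npath_end_rcons eqxx lt_k andbT.
case/lastP: p ip_npath ip_end => [|p' b] ip_npath ip_end.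
  by rewrite /npath /= -ip_end /npath_end /= eqxx.
rewrite npath_rcons2 ip_npath /nzstep -ip_end npath_end_rcons eqxx andbT negbK => Iab.
by exists p', b.
Qed.

Lemma cover_hom : @is_hom K (lamBQ HI) PathRep N cover.
Proof.
move=> a /=; apply/row_matrixP => x; rewrite row_selmx row_mul rowK.
have := pb_mem x; rewrite mem_pbasis.
case: (pb x) => [[i p] k] /= /and3P[ip_npath /eqP ip_end lt_k].
have [ext_in | ext_notin] := boolP (((i, rcons p a), k) \in pbasis (t a)).
  have [y pb_y] := pb_onto ext_in.
  rewrite /extend /= (sum_pb_eq1 _ pb_y) rowK pb_y -row_mul pathmx_rcons /padmx.
  by rewrite -!mulmxA mul_pid_mx_pad ?leq_dim_D // pid_mx_1 mulmx1.
rewrite /extend /= (sum_pb_eq0 _ ext_notin).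
have [p' [b [-> Iab]]] := extend_notin_pbasis ip_npath ip_end lt_k ext_notin.
rewrite -row_mul pathmx_rcons /padmx -!mulmxA (mulmxA (pid_mx (d (t b)))).
rewrite mul_pid_mx_pad ?leq_dim_D //.
by rewrite (mulmxA (rmap N b)) N_rel // !mulmx0 row0.
Qed.

Lemma cover_row_full j : row_full (cover j).
Proof.
apply/row_fullP; exists (selmx j (fun l => ((j, [::]), widen_ord (leq_dim_D j) l))).
apply/row_matrixP => l; rewrite row_selmx.
have ext_in : ((j, [::]), widen_ord (leq_dim_D j) l) \in pbasis j.
  by rewrite mem_pbasis /= /npath_end /= eqxx ltn_ord.
have [y pb_y] := pb_onto ext_in.
rewrite (sum_pb_eq1 _ pb_y) rowK pb_y mul1mx.
by apply/rowP => z; rewrite !mxE ltn_ord andbT.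
Qed.

Lemma PathRep_rel b a :
  I b a -> rmap PathRep a *m pid_mx (size (pbasis (t a))) *m rmap PathRep b = 0.
Proof.
move=> Iba /=; have tas := HI Iba; rewrite -tas pid_mx_1 mulmx1.
apply/row_matrixP => x; rewrite row0 row_selmx.
have := pb_mem x; rewrite mem_pbasis.
case: (pb x) => [[i p] k] /= /and3P[ip_npath /eqP ip_end lt_k].
have [ext_in | ext_notin] := boolP (((i, rcons p a), k) \in pbasis (t a)); last first.
  by rewrite /extend /= (sum_pb_eq0 _ ext_notin).
have [y pb_y] := pb_onto ext_in.
rewrite /extend /= (sum_pb_eq1 _ pb_y) -[selmx _ _]mulmx1 row_selmx pb_y /=.
rewrite sum_pb_eq0 //.
by rewrite mem_pbasis /= npath_rcons2 /nzstep tas eqxx Iba /= !andbF.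
Qed.

Lemma extend_inj a : injective (extend a).
Proof. by move=> [[i p] k] [[i' p'] k'] [-> /rcons_inj[->] ->]. Qed.

Lemma PathRep_coef a (v : 'rV[K]_(size (pbasis (s a)))) x y :
  pb y = extend a (pb x) -> (v *m rmap PathRep a) 0 y = v 0 x.
Proof.
move=> pb_y; rewrite mxE (bigD1 x) //= big1 ?addr0 => [|z ne_zx]; rewrite mxE pb_y.
  by rewrite eqxx mulr1.
by rewrite (inj_eq (@extend_inj a)) (inj_eq (@pb_inj _)) (negbTE ne_zx) mulr0.
Qed.

Lemma PathRep_exact (pred_uniq : forall a b b', I a b -> I a b' -> b = b') al be :
  I al be -> forall v : 'rV[K]_(size (pbasis (s al))), v *m rmap PathRep al = 0 ->
  (v <= rmap PathRep be *m pid_mx (size (pbasis (t be))))%MS.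
Proof.
move=> Ialbe v v_ker; have tbe := HI Ialbe; rewrite /PathRep /= tbe pid_mx_1 mulmx1.
rewrite (row_sum_delta v); apply: summx_sub => x _.
have := pb_mem x; rewrite mem_pbasis.
case pb_x: (pb x) => [[i p] k] /= /and3P[ip_npath /eqP ip_end lt_k].
have [ext_in | ext_notin] := boolP (((i, rcons p al), k) \in pbasis (t al)).
  have [y pb_y] := pb_onto ext_in.
  have <- : (v *m rmap PathRep al) 0 y = v 0 x.
    by apply: PathRep_coef; rewrite pb_y pb_x.
  by rewrite v_ker mxE scale0r sub0mx.
have [p' [b [defp Ialb]]] := extend_notin_pbasis ip_npath ip_end lt_k ext_notin.
move: pb_x ip_npath; rewrite defp (pred_uniq _ _ _ Ialb Ialbe) => pb_x ip_npath.
have /pb_onto[x' pb_x'] : ((i, p'), k) \in pbasis (s be).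
  by move: (npath_rcons_prefix ip_npath); rewrite mem_pbasis /= lt_k andbT.
apply: scalemx_sub.
suff <- : row x' (selmx (s al) (fun z => extend be (pb z))) = delta_mx 0 x.
  exact: row_sub.
by apply/rowP => y; rewrite !mxE pb_x' /extend /= -pb_x (inj_eq (@pb_inj _)) eq_sym.
Qed.

End PathModule.

Lemma projective_exact (K : fieldType) (Q0 Q1 : finType) (s t : Q1 -> Q0)
    (I : rel Q1) (HI : forall b a, I b a -> t a = s b) (n : nat)
    (path_bound : forall p, nonzero_path s t I p -> (size p < n)%N)
    (pred_uniq : forall a b b', I a b -> I a b' -> b = b')
    (P : rep K (lamQ s t)) :
  @projective_rep K (lamBQ HI) P -> forall al be, I al be ->
  forall q (V : 'M[K]_(q, rdim P (s al))), V *m rmap P al = 0 ->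
  (V <= rmap P be *m pid_mx (rdim P (t be)))%MS.
Proof.
case=> P_sat lift al be Ialbe q V V_ker.
have P_rel := (satisfiesE (Q := lamBQ HI) P).1 P_sat.
have [h [h_hom h_split]] := lift (PathRep I n P) P (cover I n P) (fun=> 1%:M)
  ((satisfiesE (Q := lamBQ HI) _).2 (PathRep_rel HI path_bound P)) P_sat
  (cover_hom path_bound P_rel) (fun a => etrans (mulmx1 _) (esym (mul1mx _)))
  (cover_row_full path_bound P).
apply/row_subP => r; set v := row r V.
have /(PathRep_exact HI path_bound pred_uniq Ialbe)/submxP[W defW] :
    v *m h (s al) *m rmap (PathRep I n P) al = 0.
  by rewrite -mulmxA -h_hom mulmxA -row_mul V_ker row0 mul0mx.
have -> : v = v *m h (s al) *m cover I n P (s al) by rewrite -mulmxA h_split mulmx1.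
rewrite defW -!mulmxA (pid_mx_natural (cover I n P) (HI _ _ Ialbe)).
rewrite (mulmxA (rmap (PathRep I n P) be)) (cover_hom (HI := HI) path_bound P_rel be).
by rewrite -!mulmxA mulmxA submxMl.
Qed.

Section Transpose.
Variables (K : fieldType) (Q0 Q1 : finType) (s t : Q1 -> Q0) (I : rel Q1).

Definition opp_rel : rel Q1 := fun b a => I a b.

Definition trrep (M : rep K (lamQ s t)) : rep K (lamQ t s) :=
  @Rep K (lamQ t s) (rdim M) (fun a => (rmap M a)^T).

Lemma trrep_rel (M : rep K (lamQ s t)) :
  (forall b a, I b a -> rmap M a *m pid_mx (rdim M (t a)) *m rmap M b = 0) ->
  forall b a, opp_rel b a ->
    rmap (trrep M) a *m pid_mx (rdim M (s a)) *m rmap (trrep M) b = 0.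
Proof.
move=> M_rel b a /M_rel /(congr1 trmx); rewrite trmx0 !trmx_mul tr_pid_mx_sq.
by rewrite mulmxA.
Qed.

Lemma nonzero_path_rev p : nonzero_path t s opp_rel p -> nonzero_path s t I (rev p).
Proof.
move=> p_nz a b p1 p2 defp.
have [] // := p_nz b a (rev p2) (rev p1).
by rewrite -[p]revK defp rev_cat !rev_cons -!cats1 -!catA.
Qed.

End Transpose.

Lemma trrep_projective (K : fieldType) (Q0 Q1 : finType) (s t : Q1 -> Q0)
    (I : rel Q1) (HI : forall b a, I b a -> t a = s b)
    (HIop : forall b a, opp_rel I b a -> s a = t b) (J : rep K (lamQ s t)) :
  @injective_rep K (lamBQ HI) J -> @projective_rep K (lamBQ HIop) (trrep J).
Proof.
case=> /(satisfiesE (Q := lamBQ HI)) J_rel ext; split.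
  by apply/(satisfiesE (Q := lamBQ HIop)); apply: trrep_rel.
move=> M N g f /(satisfiesE (Q := lamBQ HIop)) M_rel
  /(satisfiesE (Q := lamBQ HIop)) N_rel g_hom f_hom g_full.
have gT_hom : @is_hom K (lamBQ HI) (trrep N) (trrep M) (fun i => (g i)^T).
  by move=> a /=; rewrite -!trmx_mul g_hom.
have fT_hom : @is_hom K (lamBQ HI) (trrep N) J (fun i => (f i)^T).
  by move=> a /=; rewrite -[rmap J a]trmxK -!trmx_mul f_hom.
have gT_free i : row_free (g i)^T by rewrite /row_free mxrank_tr; apply: g_full.
have [h [h_hom hgf]] := ext (trrep N) (trrep M) (fun i => (g i)^T) (fun i => (f i)^T)
  ((satisfiesE (Q := lamBQ HI) _).2 (trrep_rel N_rel))
  ((satisfiesE (Q := lamBQ HI) _).2 (trrep_rel M_rel))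
  gT_hom fT_hom gT_free.
exists (fun i => (h i)^T); split => [a | i].
  by rewrite /= -[rmap M a]trmxK -!trmx_mul (h_hom a).
by rewrite -[f i]trmxK -hgf trmx_mul trmxK.
Qed.

Lemma injective_exact (K : fieldType) (Q0 Q1 : finType) (s t : Q1 -> Q0)
    (I : rel Q1) (HI : forall b a, I b a -> t a = s b) (n : nat)
    (path_bound : forall p, nonzero_path s t I p -> (size p < n)%N)
    (succ_uniq : forall a c c', I c a -> I c' a -> c = c')
    (J : rep K (lamQ s t)) :
  @injective_rep K (lamBQ HI) J -> forall g a, I g a ->
  forall m (Y : 'M[K]_(m, rdim J (t a))),
  Y *m pid_mx (rdim J (t a)) *m rmap J g = 0 -> (Y <= rmap J a)%MS.
Proof.
move=> J_inj g a Iga m Y; rewrite -mulmxA; apply: ker_sub_img_dual => q V.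
have HIop b a' : opp_rel I b a' -> s a' = t b by move/HI.
have op_bound p : nonzero_path t s (opp_rel I) p -> (size p < n)%N.
  by rewrite -size_rev => /nonzero_path_rev/path_bound.
have op_uniq a' b b' : opp_rel I a' b -> opp_rel I a' b' -> b = b' by apply: succ_uniq.
rewrite trmx_mul tr_pid_mx_sq.
exact: (projective_exact op_bound op_uniq (trrep_projective HIop J_inj) Iga).
Qed.

Section GentleCycles.
Variables (Q0 Q1 : finType) (s t : Q1 -> Q0) (I : rel Q1).
Hypothesis HI : forall b a, I b a -> t a = s b.

Lemma gentle_pred_uniq : gentle s t I -> forall a b b', I a b -> I a b' -> b = b'.
Proof.
case=> _ [_ gentle_arr] a b b' Iab Iab'; have [_ _ le1 _] := gentle_arr a.
by apply: (card_le1_eqP le1); rewrite inE /= ?(HI Iab) ?(HI Iab') eqxx ?Iab ?Iab'.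
Qed.

Lemma gentle_succ_uniq : gentle s t I -> forall a c c', I c a -> I c' a -> c = c'.
Proof.
case=> _ [_ gentle_arr] a c c' Ica Ic'a; have [_ _ _ le1] := gentle_arr a.
by apply: (card_le1_eqP le1); rewrite inE /= -?(HI Ica) -?(HI Ic'a) eqxx ?Ica ?Ic'a.
Qed.

Lemma cyc_nth_rel (x0 x : Q1) p :
    (forall i, (i < size p)%N -> I (nth x0 p i) (nth x0 p (i.+1 %% size p))) ->
  forall i, (i < size p)%N -> I (nth x p i) (nth x p (i.+1 %% size p)).
Proof.
move=> p_rel i lt_i; have p_gt0 : (0 < size p)%N by apply: leq_ltn_trans lt_i.
by rewrite !(set_nth_default x0) ?ltn_pmod //; apply: p_rel.
Qed.

Lemma is_cyc_prev a : is_cyc I a -> exists b, I a b /\ is_cyc I b.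
Proof.
case=> p [p_uniq a_in p_rel]; have lt_a : (index a p < size p)%N by rewrite index_mem.
have p_gt0 : (0 < size p)%N by apply: leq_ltn_trans lt_a.
set b := nth a p ((index a p).+1 %% size p); exists b; split.
  by have := p_rel _ lt_a; rewrite nth_index.
exists p; split; rewrite ?mem_nth ?ltn_pmod //; exact: cyc_nth_rel p_rel.
Qed.

Lemma is_cyc_next a : is_cyc I a -> exists c, I c a /\ is_cyc I c.
Proof.
case=> p [p_uniq a_in p_rel]; have lt_a : (index a p < size p)%N by rewrite index_mem.
have p_gt0 : (0 < size p)%N by apply: leq_ltn_trans lt_a.
set j := ((index a p + (size p).-1) %% size p)%N.
have lt_j : (j < size p)%N by rewrite ltn_pmod.
have j_succ : (j.+1 %% size p)%N = index a p.
  by rewrite -addn1 modnDml -addnA addn1 prednK // modnDr modn_small.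
exists (nth a p j); split; first by have := p_rel _ lt_j; rewrite j_succ nth_index.
exists p; split; rewrite ?mem_nth //; exact: cyc_nth_rel p_rel.
Qed.

Hypothesis pred_uniq : forall a b b', I a b -> I a b' -> b = b'.
Hypothesis succ_uniq : forall a c c', I c a -> I c' a -> c = c'.

Lemma is_cyc_relL b a : I b a -> is_cyc I a -> is_cyc I b.
Proof. by move=> Iba /is_cyc_next[c [Ica c_cyc]]; rewrite (succ_uniq Iba Ica). Qed.

Lemma is_cyc_relR b a : I b a -> is_cyc I b -> is_cyc I a.
Proof. by move=> Iba /is_cyc_prev[a' [Iba' a'_cyc]]; rewrite (pred_uniq Iba Iba'). Qed.

End GentleCycles.

Section Restriction.
Variables (K : fieldType) (Q0 Q1 : finType) (s t : Q1 -> Q0) (I : rel Q1).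
Hypothesis HI : forall b a, I b a -> t a = s b.
Hypothesis pred_uniq : forall a b b', I a b -> I a b' -> b = b'.
Hypothesis succ_uniq : forall a c c', I c a -> I c' a -> c = c'.

Definition resmap (M : rep K (ausQ s t I)) (a : Q1) :
    'M[K]_(rdim M (inl (s a)), rdim M (inl (t a))) :=
  match excluded_middle_informative (is_cyc I a) with
  | left a_cyc => rmap M (APlus (exist _ a a_cyc)) *m rmap M (AMinus (exist _ a a_cyc))
  | right a_ncyc => rmap M (ANc (exist _ a a_ncyc))
  end.

Definition Res (M : rep K (ausQ s t I)) : rep K (lamQ s t) :=
  @Rep K (lamQ s t) (fun i => rdim M (inl i)) (resmap M).

Lemma resmap_cyc M a (a_cyc : is_cyc I a) :
  resmap M a = rmap M (APlus (exist _ a a_cyc)) *m rmap M (AMinus (exist _ a a_cyc)).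
Proof.
rewrite /resmap; case: excluded_middle_informative => [a_cyc' | //].
by rewrite (proof_irrelevance _ a_cyc' a_cyc).
Qed.

Lemma resmap_ncyc M a (a_ncyc : ~ is_cyc I a) :
  resmap M a = rmap M (ANc (exist _ a a_ncyc)).
Proof.
rewrite /resmap; case: excluded_middle_informative => [// | a_ncyc'].
by rewrite (proof_irrelevance _ a_ncyc' a_ncyc).
Qed.

Lemma resmap_Phi (M : rep K (lamQ s t)) a : resmap (Phi I M) a = rmap M a.
Proof.
have [a_cyc | a_ncyc] := classic (is_cyc I a).
  by rewrite (resmap_cyc _ a_cyc) /= mulmx_base.
by rewrite (resmap_ncyc _ a_ncyc).
Qed.

Lemma Res_hom (M N : rep K (ausQ s t I)) (g : forall v, 'M[K]_(rdim M v, rdim N v)) :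
  @is_hom K (ausBQ HI) M N g ->
  @is_hom K (lamBQ HI) (Res M) (Res N) (fun i => g (inl i)).
Proof.
move=> g_hom a /=; have [a_cyc | a_ncyc] := classic (is_cyc I a).
  rewrite !resmap_cyc -mulmxA (g_hom (AMinus (exist _ a a_cyc))) mulmxA.
  by rewrite (g_hom (APlus (exist _ a a_cyc))) mulmxA.
by rewrite !resmap_ncyc (g_hom (ANc (exist _ a a_ncyc))).
Qed.

Lemma Res_sat (M : rep K (ausQ s t I)) :
  @satisfies K (ausBQ HI) M -> @satisfies K (lamBQ HI) (Res M).
Proof.
move/(satisfiesE (Q := ausBQ HI)) => M_rel.
apply/(satisfiesE (Q := lamBQ HI)) => b a Iba /=.
have [a_cyc | a_ncyc] := classic (is_cyc I a).
  have b_cyc := is_cyc_relL succ_uniq Iba a_cyc.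
  have M_ab := M_rel (APlus (exist _ b b_cyc)) (AMinus (exist _ a a_cyc)) Iba.
  rewrite (resmap_cyc _ a_cyc) (resmap_cyc _ b_cyc) -!mulmxA.
  rewrite (mulmxA (rmap M (AMinus _))).
  by rewrite (mulmxA (rmap M (AMinus _) *m _)) M_ab mul0mx mulmx0.
have b_ncyc : ~ is_cyc I b by move/(is_cyc_relR pred_uniq Iba).
rewrite (resmap_ncyc _ a_ncyc) (resmap_ncyc _ b_ncyc).
exact: (M_rel (ANc (exist _ b b_ncyc)) (ANc (exist _ a a_ncyc)) Iba).
Qed.

Lemma Phi_sat (M : rep K (lamQ s t)) :
  @satisfies K (lamBQ HI) M -> @satisfies K (ausBQ HI) (Phi I M).
Proof.
move/(satisfiesE (Q := lamBQ HI)) => M_rel; apply/(satisfiesE (Q := ausBQ HI)).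
case=> [y|y|y] [x|x|x] //= Iyx; first exact: M_rel.
exact/base_mul_eq0/M_rel.
Qed.

End Restriction.

Section PhiLift.
Variables (K : fieldType) (Q0 Q1 : finType) (s t : Q1 -> Q0) (I : rel Q1).
Hypothesis HI : forall b a, I b a -> t a = s b.
Variables (P : rep K (lamQ s t)) (M : rep K (ausQ s t I)).
Variable h : forall i, 'M[K]_(rdim P i, rdim M (inl i)).
Hypothesis h_hom : @is_hom K (lamBQ HI) P (Res M) h.
Hypothesis h_ker : forall (x : cycA I) q (V : 'M[K]_(q, rdim P (s (sval x)))),
  V *m rmap P (sval x) = 0 -> V *m (h (s (sval x)) *m rmap M (APlus x)) = 0.

Definition Phi_lift v : 'M[K]_(rdim (Phi I P) v, rdim M v) :=
  match v as v return 'M[K]_(rdim (Phi I P) v, rdim M v) with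
  | inl i => h i
  | inr x => pinvmx (col_base (rmap P (sval x))) *m (h (s (sval x)) *m rmap M (APlus x))
  end.

Lemma Phi_lift_factor x :
  col_base (rmap P (sval x)) *m Phi_lift (inr x) = h (s (sval x)) *m rmap M (APlus x).
Proof. by apply: col_base_factor; apply: h_ker. Qed.

Lemma Phi_lift_hom : @is_hom K (ausBQ HI) (Phi I P) M Phi_lift.
Proof.
case=> [[a a_ncyc] | x | x].
- by rewrite /= (h_hom a) /= (resmap_ncyc _ a_ncyc).
- exact: Phi_lift_factor.
apply: (row_full_inj (col_base_full (rmap P (sval x)))).
rewrite mulmxA [in RHS]mulmxA Phi_lift_factor /= mulmx_base (h_hom (sval x)) /=.
by case: x => a a_cyc; rewrite (resmap_cyc _ a_cyc) mulmxA.
Qed.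

Lemma Phi_lift_comp (N : rep K (ausQ s t I)) (g : forall v, 'M[K]_(rdim M v, rdim N v))
    (f : forall v, 'M[K]_(rdim (Phi I P) v, rdim N v)) :
  @is_hom K (ausBQ HI) M N g -> @is_hom K (ausBQ HI) (Phi I P) N f ->
  (forall i, h i *m g (inl i) = f (inl i)) -> forall v, Phi_lift v *m g v = f v.
Proof.
move=> g_hom f_hom hgf [i | x]; first exact: hgf.
apply: (row_full_inj (col_base_full (rmap P (sval x)))).
rewrite mulmxA Phi_lift_factor -mulmxA (g_hom (APlus x)) mulmxA hgf.
exact: (esym (f_hom (APlus x))).
Qed.

End PhiLift.

Section PhiColift.
Variables (K : fieldType) (Q0 Q1 : finType) (s t : Q1 -> Q0) (I : rel Q1).
Hypothesis HI : forall b a, I b a -> t a = s b.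
Variables (J : rep K (lamQ s t)) (M : rep K (ausQ s t I)).
Variable h : forall i, 'M[K]_(rdim M (inl i), rdim J i).
Hypothesis h_hom : @is_hom K (lamBQ HI) (Res M) J h.
Hypothesis h_img :
  forall x : cycA I, (rmap M (AMinus x) *m h (t (sval x)) <= rmap J (sval x))%MS.

Definition Phi_colift v : 'M[K]_(rdim M v, rdim (Phi I J) v) :=
  match v as v return 'M[K]_(rdim M v, rdim (Phi I J) v) with
  | inl i => h i
  | inr x => rmap M (AMinus x) *m h (t (sval x)) *m pinvmx (row_base (rmap J (sval x)))
  end.

Lemma Phi_colift_factor x :
  Phi_colift (inr x) *m row_base (rmap J (sval x)) =
  rmap M (AMinus x) *m h (t (sval x)).
Proof. exact: row_base_factor (h_img x). Qed.

Lemma Phi_colift_hom : @is_hom K (ausBQ HI) M (Phi I J) Phi_colift.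
Proof.
case=> [[a a_ncyc] | x | x].
- by rewrite /= -(resmap_ncyc _ a_ncyc) (h_hom a).
- apply: (row_free_inj (row_base_free (rmap J (sval x)))).
  rewrite -mulmxA Phi_colift_factor -[in RHS]mulmxA /= mulmx_base -(h_hom (sval x)) /=.
  by case: x => a a_cyc; rewrite (resmap_cyc _ a_cyc) mulmxA.
- exact: esym (Phi_colift_factor x).
Qed.

Lemma Phi_colift_comp (L : rep K (ausQ s t I))
    (g : forall v, 'M[K]_(rdim L v, rdim M v))
    (f : forall v, 'M[K]_(rdim L v, rdim (Phi I J) v)) :
  @is_hom K (ausBQ HI) L M g -> @is_hom K (ausBQ HI) L (Phi I J) f ->
  (forall i, g (inl i) *m h i = f (inl i)) -> forall v, g v *m Phi_colift v = f v.
Proof.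
move=> g_hom f_hom ghf [i | x]; first exact: ghf.
apply: (row_free_inj (row_base_free (rmap J (sval x)))).
rewrite -mulmxA Phi_colift_factor mulmxA -(g_hom (AMinus x)) -mulmxA ghf.
exact: (f_hom (AMinus x)).
Qed.

End PhiColift.

Section PhiPreserves.
Variables (K : fieldType) (Q0 Q1 : finType) (s t : Q1 -> Q0) (I : rel Q1).
Hypothesis HI : forall b a, I b a -> t a = s b.
Variable n : nat.
Hypothesis path_bound : forall p, nonzero_path s t I p -> (size p < n)%N.
Hypothesis pred_uniq : forall a b b', I a b -> I a b' -> b = b'.
Hypothesis succ_uniq : forall a c c', I c a -> I c' a -> c = c'.

Lemma projective_lift_ker (P : rep K (lamQ s t)) (M : rep K (ausQ s t I))
    (h : forall i, 'M[K]_(rdim P i, rdim M (inl i))) :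
  @projective_rep K (lamBQ HI) P -> @satisfies K (ausBQ HI) M ->
  @is_hom K (lamBQ HI) P (Res M) h ->
  forall (x : cycA I) q (V : 'M[K]_(q, rdim P (s (sval x)))),
  V *m rmap P (sval x) = 0 -> V *m (h (s (sval x)) *m rmap M (APlus x)) = 0.
Proof.
move=> P_proj /(satisfiesE (Q := ausBQ HI)) M_rel h_hom [a a_cyc] q V /= V_ker.
have [b [Iab b_cyc]] := is_cyc_prev a_cyc.
have /submxP[W ->] := projective_exact path_bound pred_uniq P_proj Iab V_ker.
rewrite -!mulmxA (mulmxA (pid_mx _)) (pid_mx_natural h (HI Iab)).
rewrite -(mulmxA (h _)) (mulmxA (rmap P b)) (h_hom b) /= (resmap_cyc _ b_cyc) -!mulmxA.
rewrite (mulmxA (rmap M (AMinus _))).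
rewrite (M_rel (APlus (exist _ a a_cyc)) (AMinus (exist _ b b_cyc)) Iab).
by rewrite !mulmx0.
Qed.

Lemma injective_colift_img (J : rep K (lamQ s t)) (M : rep K (ausQ s t I))
    (h : forall i, 'M[K]_(rdim M (inl i), rdim J i)) :
  @injective_rep K (lamBQ HI) J -> @satisfies K (ausBQ HI) M ->
  @is_hom K (lamBQ HI) (Res M) J h ->
  forall x : cycA I, (rmap M (AMinus x) *m h (t (sval x)) <= rmap J (sval x))%MS.
Proof.
move=> J_inj /(satisfiesE (Q := ausBQ HI)) M_rel h_hom [a a_cyc] /=.
have [c [Ica c_cyc]] := is_cyc_next a_cyc.
apply: (injective_exact path_bound succ_uniq J_inj Ica).
rewrite -!mulmxA (mulmxA (h _)) -(pid_mx_natural h (HI Ica)) -mulmxA -(h_hom c) /=.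
rewrite (resmap_cyc _ c_cyc) !mulmxA.
by rewrite (M_rel (APlus (exist _ c c_cyc)) (AMinus (exist _ a a_cyc)) Ica) !mul0mx.
Qed.

Lemma Phi_projective (P : rep K (lamQ s t)) :
  @projective_rep K (lamBQ HI) P -> @projective_rep K (ausBQ HI) (Phi I P).
Proof.
move=> P_proj; have [P_sat lift] := P_proj; split; first exact: Phi_sat.
move=> M N g f M_sat N_sat g_hom f_hom g_full.
have fP_hom : @is_hom K (lamBQ HI) P (Res N) (fun i => f (inl i)).
  by move=> a; rewrite -(resmap_Phi I P a); apply: (Res_hom f_hom).
have [h [h_hom hgf]] := lift (Res M) (Res N) _ _ (Res_sat pred_uniq succ_uniq M_sat)
  (Res_sat pred_uniq succ_uniq N_sat) (Res_hom g_hom) fP_hom (fun i => g_full (inl i)).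
have h_ker := projective_lift_ker P_proj M_sat h_hom.
by exists (Phi_lift h); split; [apply: Phi_lift_hom | apply: Phi_lift_comp].
Qed.

Lemma Phi_injective (J : rep K (lamQ s t)) :
  @injective_rep K (lamBQ HI) J -> @injective_rep K (ausBQ HI) (Phi I J).
Proof.
move=> J_inj; have [J_sat ext] := J_inj; split; first exact: Phi_sat.
move=> L M g f L_sat M_sat g_hom f_hom g_free.
have fJ_hom : @is_hom K (lamBQ HI) (Res L) J (fun i => f (inl i)).
  by move=> a; rewrite -(resmap_Phi I J a); apply: (Res_hom f_hom).
have [h [h_hom ghf]] := ext (Res L) (Res M) _ _ (Res_sat pred_uniq succ_uniq L_sat)
  (Res_sat pred_uniq succ_uniq M_sat) (Res_hom g_hom) fJ_hom (fun i => g_free (inl i)).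
have h_img := injective_colift_img J_inj M_sat h_hom.
by exists (Phi_colift h); split; [apply: Phi_colift_hom | apply: Phi_colift_comp].
Qed.

End PhiPreserves.

Theorem lemma3p4 (K : closedFieldType) (Q0 Q1 : finType) (s t : Q1 -> Q0)
  (I : rel Q1) (HI : forall b a, I b a -> t a = s b) :
  gentle s t I -> fin_dim s t I ->
  (forall P : rep K (lamQ s t),
     @projective_rep K (lamBQ HI) P ->
     @projective_rep K (ausBQ HI) (Phi I P)) /\
  (forall J : rep K (lamQ s t),
     @injective_rep K (lamBQ HI) J ->
     @injective_rep K (ausBQ HI) (Phi I J)).
Proof.
move=> I_gentle [n path_bound].
have pred_uniq := gentle_pred_uniq HI I_gentle.
have succ_uniq := gentle_succ_uniq HI I_gentle.
split=> [P | J].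
  exact: (Phi_projective path_bound pred_uniq succ_uniq).
exact: (Phi_injective path_bound pred_uniq succ_uniq).
Qed.
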